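(* Let $n\ge4$ be even, $p\ge n+1$ an integer, $c_1$ a positive integer, $a_k=pc_k$, $c_{k+1}=p^2c_k$, and let $T$, $I^{(k)}_i$ and $\lambda_1$ be as in the context. Then for every $k\ge1$ and every $1\le i\le n/2-1$: (1) $\lambda_1(I^{(k)}_{2i+1})\le\frac{1}{p-1}\lambda_1(I^{(k)}_{2i})$; (2) $\lambda_1(I^{(k)}_{2i})\le\frac{1}{c_k}\lambda_1(I^{(k)}_n)$; (3) $\lambda_1(I^{(k)}_{2i})\le\frac{1}{c_k-1}\lambda_1(I^{(k)}_1)$.
   Context: $\pi$ is the permutation of $\{1,\dots,n\}$ with top row $1,2,\dots,n$ and bottom row $n,3,2,5,4,\dots,n-1,n-2,1$. Right Rauzy induction: step ''0'' when the rightmost domain (top) interval is longer, ''1'' when the rightmost image (bottom) interval is longer. For $a,c>0$, $\dot\gamma_{m,a}=1^{n-1-m}0^a10^2$, $\gamma_{a,c}=0\,\dot\gamma_{n-2,a}\cdots\dot\gamma_{2,a}\,1^{c(n-1)}$; its transition matrix $\Theta_{a,c}$ (old lengths $=\Theta_{a,c}\cdot$new lengths) has row $1=(1,c,\dots,c)$, row $n=(1,c+1,\dots,c+1)$, and for $1\le i\le(n-2)/2$: row $2i$ has $0$ in column 1, $2$ in columns $2i,2i+1$, $1$ in the other columns among $2,\dots,n$; row $2i+1$ has $a$ in column $2i$, $a+1$ in column $2i+1$, $0$ elsewhere. $\Theta_k=\Theta_{a_k,c_k}$. $T$ is an IET of $[0,1)$ with permutation $\pi$ whose right Rauzy induction path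 is $\gamma_{a_1,c_1}\gamma_{a_2,c_2}\cdots$; $I^{(k)}$ is the interval on which the induced map lives after the first $k$ blocks and $I^{(k)}_1,\dots,I^{(k)}_n$ its exchanged subintervals; lengths satisfy $\ell^{(k-1)}=\Theta_k\ell^{(k)}$. For $v\ge0$, $|v|$ is the sum of entries and $\overline v=v/|v|$. $\lambda_1$ denotes the $T$-invariant Borel probability measure such that for every $k\ge0$, $(\lambda_1(I^{(k)}_i))_i$ is a positive multiple of $\lim_{m\to\infty}\overline{\Theta_{k+1}\cdots\Theta_me_1}$. *)

From HB Require Import structures.
From mathcomp Require Import all_boot all_order all_algebra.
From mathcomp Require Import all_classical all_reals all_analysis.
Set Implicit Arguments. Unset Strict Implicit. Unset Printing Implicit Defensive.
Import Order.TTheory GRing.Theory Num.Theory.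
Local Open Scope ring_scope.

(* Entry (i,j) (1-based indices, 1 <= i,j <= n) of the transition matrix
   Theta_{a,c} of the path gamma_{a,c}, exactly as described in the paper. *)
Definition theta_entry (n a c i j : nat) : nat :=
  if i == 1%N then (if j == 1%N then 1%N else c)
  else if i == n then (if j == 1%N then 1%N else c.+1)
  else if ~~ odd i then
    (if j == 1%N then 0%N else if (j == i) || (j == i.+1) then 2%N else 1%N)
  else
    (if j == i.-1 then a else if j == i then a.+1 else 0%N).

(* Theta_{a,c} as an n x n real matrix ('I_n is 0-based, so shift by one). *)
Definition Theta (R : realType) (n a c : nat) : 'M[R]_n :=
  \matrix_(i < n, j < n) (theta_entry n a c i.+1 j.+1)%:R.

(* c_k = p^(2(k-1)) c_1 (so c_{k+1} = p^2 c_k), a_k = p c_k, for k >= 1. *)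
Definition cseq (p c1 k : nat) : nat := (p ^ (2 * k.-1) * c1)%N.
Definition aseq (p c1 k : nat) : nat := (p * cseq p c1 k)%N.

Definition Theta_k (R : realType) (n p c1 k : nat) : 'M[R]_n :=
  Theta R n (aseq p c1 k) (cseq p c1 k).

(* prodTheta k m = Theta_{k+1} Theta_{k+2} ... Theta_m  (identity if m <= k). *)
Fixpoint prodTheta (R : realType) (n p c1 k m : nat) : 'M[R]_n :=
  match m with
  | 0 => 1%:M
  | m'.+1 => if (k <= m')%N then prodTheta R n p c1 k m' *m Theta_k R n p c1 m'.+1
             else 1%:M
  end.

Definition e1 (R : realType) (n : nat) : 'cV[R]_n :=
  \col_(i < n) (if (i : nat) == 0%N then 1 else 0).

Definition normalize (R : realType) (n : nat) (v : 'cV[R]_n) : 'cV[R]_n :=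
  (\sum_(l < n) v l 0)^-1 *: v.

Definition nvec (R : realType) (n p c1 k m : nat) : 'cV[R]_n :=
  normalize (prodTheta R n p c1 k m *m e1 R n).

From HB Require Import structures.
From mathcomp Require Import all_boot all_order all_algebra.
From mathcomp Require Import all_classical all_reals all_analysis.
From mathcomp Require Import zify lra.
Import Order.TTheory GRing.Theory Num.Theory.
Import numFieldNormedType.Exports.
Local Open Scope classical_set_scope.
Local Open Scope ring_scope.

(* The three inequalities, read as conditions on a nonnegative vector w indexed
   from 1, are carried through the transition matrices: if w satisfies them with
   constant p^2 c, then Theta_{pc,c} w satisfies them with constant c.  Indeed
   rows 1, 2i and n of Theta_{pc,c} w all contain the sum S of the coordinates
   2..n of w, and S >= w_n >= p^2 c w_{2i} dominates every other term, while
   row 2i+1 is controlled by (p - 1) w_{2i+1} <= w_{2i}.  Since e_1 satisfies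
   them for any constants and c_{k+2} = p^2 c_{k+1}, every product
   Theta_{k+1} ... Theta_m e_1 satisfies them with constant c_{k+1} >= c_k; the
   inequalities survive normalisation, the limit m -> oo and rescaling to
   lambda_1. *)

Set Implicit Arguments.
Unset Strict Implicit.
Unset Printing Implicit Defensive.

Lemma theta_entry_first n a c j :
  theta_entry n a c 1 j = (c * (j != 1) + (j == 1))%N.
Proof.
rewrite /theta_entry eqxx.
by case: eqP => _; rewrite ?muln0 ?muln1 ?addn0 ?add0n.
Qed.

Lemma theta_entry_last n a c j : (1 < n)%N ->
  theta_entry n a c n j = (c.+1 * (j != 1) + (j == 1))%N.
Proof.
move=> n_gt1; rewrite /theta_entry eqxx ifN; last by rewrite neq_ltn n_gt1 orbT.
by case: eqP => _; rewrite ?muln0 ?muln1 ?addn0 ?add0n.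
Qed.

Lemma theta_entry_even n a c r j : ~~ odd r -> (1 < r < n)%N ->
  theta_entry n a c r j = ((j != 1) + (j == r) + (j == r.+1))%N.
Proof.
move=> r_even /andP[r_gt1 r_ltn]; rewrite /theta_entry r_even.
rewrite ifN; last by rewrite neq_ltn r_gt1 orbT.
rewrite ifN; last by rewrite neq_ltn r_ltn.
by do !case: eqP => //=; lia.
Qed.

Lemma theta_entry_odd n a c r j : odd r -> (1 < r < n)%N ->
  theta_entry n a c r j = (a * (j == r.-1) + a.+1 * (j == r))%N.
Proof.
move=> r_odd /andP[r_gt1 r_ltn]; rewrite /theta_entry r_odd.
rewrite ifN; last by rewrite neq_ltn r_gt1 orbT.
rewrite ifN; last by rewrite neq_ltn r_ltn.
by do !case: eqP => //=; lia.
Qed.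

Lemma cseqSS p c1 k : cseq p c1 k.+2 = (p ^ 2 * cseq p c1 k.+1)%N.
Proof. by rewrite /cseq /= mulnA -expnD mulnS. Qed.

Lemma cseq_leS p c1 k : (0 < p)%N -> (cseq p c1 k <= cseq p c1 k.+1)%N.
Proof.
by case: k => [|k] p_gt0 //; rewrite cseqSS leq_pmull // expn_gt0 p_gt0.
Qed.

Section ThetaProducts.
Variables (R : realType) (n p c1 : nat).

Lemma prodTheta_id k m : (m <= k)%N -> prodTheta R n p c1 k m = 1%:M.
Proof. by case: m => //= m le_mk; rewrite ifN // -ltnNge. Qed.

Lemma prodTheta_recl k m : (k < m)%N ->
  prodTheta R n p c1 k m = Theta_k R n p c1 k.+1 *m prodTheta R n p c1 k.+1 m.
Proof.
elim: m => // m IH lt_km /=; rewrite -ltnS lt_km.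
have [lt_k_m | eq_k_m] := ltnP k m.
- by rewrite IH // -mulmxA.
- have -> : m = k by apply/eqP; rewrite eqn_leq eq_k_m -ltnS lt_km.
  by rewrite prodTheta_id // mul1mx mulmx1.
Qed.

End ThetaProducts.

Section ThetaAction.
Variables (R : realType) (N : nat).
Implicit Types (w : 'cV[R]_N.+1) (a c : nat).

Definition coord w (j : nat) : R := w (inord j.-1) 0.

Definition tail_sum w : R := \sum_(l < N.+1 | l != ord0) w l 0.

Lemma coord_mul_Theta a c w r : (0 < r <= N.+1)%N ->
  coord (Theta R N.+1 a c *m w) r =
  \sum_(l < N.+1) (theta_entry N.+1 a c r l.+1)%:R * w l 0.
Proof.
move=> /andP[r_gt0 r_le]; rewrite /coord !mxE; apply: eq_bigr => l _.
by rewrite mxE inordK ?prednK // -ltnS prednK.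
Qed.

Lemma sum_indicator_coord w j : (0 < j <= N.+1)%N ->
  \sum_(l < N.+1) (l.+1 == j)%:R * w l 0 = coord w j.
Proof.
move=> /andP[j_gt0 j_le]; have j1_lt : (j.-1 < N.+1)%N by rewrite prednK.
rewrite (bigD1 (inord j.-1)) //= inordK // prednK // eqxx mul1r big1 ?addr0 //.
move=> l; rewrite -val_eqE /= inordK // => l_neq.
by rewrite -(prednK j_gt0) eqSS (negbTE l_neq) mul0r.
Qed.

Lemma sum_indicator_tail w :
  \sum_(l < N.+1) (l.+1 != 1)%:R * w l 0 = tail_sum w.
Proof.
rewrite /tail_sum [RHS]big_mkcond; apply: eq_bigr => l _ /=.
by rewrite eqSS -val_eqE mulr_natl mulrb.
Qed.

Lemma coord_Theta_first a c w :
  coord (Theta R N.+1 a c *m w) 1 = c%:R * tail_sum w + coord w 1.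
Proof.
rewrite coord_mul_Theta //.
under eq_bigr do rewrite theta_entry_first natrD natrM mulrDl -mulrA.
by rewrite big_split /= -mulr_sumr sum_indicator_tail sum_indicator_coord.
Qed.

Lemma coord_Theta_last a c w : (0 < N)%N ->
  coord (Theta R N.+1 a c *m w) N.+1 = c.+1%:R * tail_sum w + coord w 1.
Proof.
move=> N_gt0; rewrite coord_mul_Theta ?leqnn //.
under eq_bigr do
  rewrite (@theta_entry_last N.+1 a c _ N_gt0) natrD natrM mulrDl -mulrA.
by rewrite big_split /= -mulr_sumr sum_indicator_tail sum_indicator_coord.
Qed.

Lemma coord_Theta_even a c w i : (0 < i)%N -> ((2 * i).+1 < N.+1)%N ->
  coord (Theta R N.+1 a c *m w) (2 * i) =
  tail_sum w + coord w (2 * i) + coord w (2 * i).+1.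
Proof.
move=> i_gt0 i_lt; rewrite coord_mul_Theta; last by lia.
have row_2i j : theta_entry N.+1 a c (2 * i) j =
    ((j != 1) + (j == 2 * i) + (j == (2 * i).+1))%N.
  by apply: theta_entry_even; [rewrite oddM | lia].
under eq_bigr do rewrite row_2i !natrD !mulrDl.
by rewrite !big_split /= sum_indicator_tail !sum_indicator_coord //; lia.
Qed.

Lemma coord_Theta_odd a c w i : (0 < i)%N -> ((2 * i).+1 < N.+1)%N ->
  coord (Theta R N.+1 a c *m w) (2 * i).+1 =
  a%:R * coord w (2 * i) + a.+1%:R * coord w (2 * i).+1.
Proof.
move=> i_gt0 i_lt; rewrite coord_mul_Theta; last by lia.
have row_2i1 j : theta_entry N.+1 a c (2 * i).+1 j =
    (a * (j == 2 * i) + a.+1 * (j == (2 * i).+1))%N.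
  by apply: theta_entry_odd; [rewrite /= oddM | lia].
under eq_bigr do rewrite row_2i1 natrD !natrM mulrDl -!mulrA.
by rewrite big_split /= -!mulr_sumr !sum_indicator_coord //; lia.
Qed.

Lemma coord_e1 j : (0 < j <= N.+1)%N -> coord (e1 R N.+1) j = (j == 1)%:R.
Proof.
move=> /andP[j_gt0 j_le]; rewrite /coord mxE inordK ?prednK //.
by case: j j_gt0 {j_le} => [|[|j]].
Qed.

Lemma entries_ge0_coord w :
  (forall j, (0 < j <= N.+1)%N -> 0 <= coord w j) -> forall l, 0 <= w l 0.
Proof.
by move=> w_ge0 l; have := w_ge0 l.+1 (ltn_ord l); rewrite /coord inord_val.
Qed.

Lemma coord_mul_Theta_ge0 a c w :
  (forall l, 0 <= w l 0) -> forall j, 0 <= coord (Theta R N.+1 a c *m w) j.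
Proof.
move=> w_ge0 j; rewrite /coord mxE; apply: sumr_ge0 => l _.
by rewrite mxE mulr_ge0.
Qed.

Lemma coord_last_le_tail_sum w : (0 < N)%N -> (forall l, 0 <= w l 0) ->
  coord w N.+1 <= tail_sum w.
Proof.
move=> N_gt0 w_ge0; rewrite /tail_sum (bigD1 (inord N)) /=; last first.
  by rewrite -val_eqE /= inordK // -lt0n.
by rewrite lerDl sumr_ge0.
Qed.

End ThetaAction.

Section RatioBounds.
Variable R : realType.
Implicit Types (n : nat) (p c t : R) (v : nat -> R).

(* [v] is read as a vector indexed by 1..n and ignored elsewhere, so that
   [lam k] itself can play the role of [v]. *)
Definition ratio_bounds n p c v : Prop :=
  (forall j, (0 < j <= n)%N -> 0 <= v j) /\
  forall i, (0 < i)%N -> ((2 * i).+1 < n)%N ->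
    [/\ (p - 1) * v (2 * i).+1 <= v (2 * i)%N, c * v (2 * i)%N <= v n
      & (c - 1) * v (2 * i)%N <= v 1%N].

Lemma ratio_bounds_scale n p c t v w : 0 <= t ->
  (forall j, (0 < j <= n)%N -> w j = t * v j) ->
  ratio_bounds n p c v -> ratio_bounds n p c w.
Proof.
move=> t_ge0 w_eq [v_ge0 v_bounds]; split => [j j_range | i i_gt0 i_lt].
  by rewrite w_eq // mulr_ge0 // v_ge0.
have [hA hB hC] := v_bounds i i_gt0 i_lt.
rewrite !w_eq ?leqnn ?andbT; try lia.
by split; rewrite mulrCA ler_wpM2l.
Qed.

Lemma ratio_bounds_le n p c c' v : c <= c' ->
  ratio_bounds n p c' v -> ratio_bounds n p c v.
Proof.
move=> le_cc' [v_ge0 v_bounds]; split => // i i_gt0 i_lt.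
have v2i_ge0 : 0 <= v (2 * i)%N by apply: v_ge0; lia.
have [hA hB hC] := v_bounds i i_gt0 i_lt.
split => //; [apply: le_trans hB | apply: le_trans hC];
  by rewrite ler_wpM2r // ?lerD2r.
Qed.

Lemma ler_cvg_scale (f g : nat -> R) (a l l' : R) :
  f @ \oo --> l -> g @ \oo --> l' -> (forall m, a * f m <= g m) -> a * l <= l'.
Proof.
move=> fl gl afg; apply: (ler_cvg_to (cvgM (cvg_cst a) fl) gl).
exact: nearW.
Qed.

Lemma ratio_bounds_lim n p c (v_ : nat -> nat -> R) v :
  (forall j, (fun m => v_ m j) @ \oo --> v j) ->
  (forall m, ratio_bounds n p c (v_ m)) -> ratio_bounds n p c v.
Proof.
move=> v_lim v_bounds; split => [j j_range | i i_gt0 i_lt].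
  apply: (ler_cvg_to (cvg_cst 0) (v_lim j)); apply: nearW => m.
  by have [v_ge0 _] := v_bounds m; apply: v_ge0.
split; apply: ler_cvg_scale (v_lim _) (v_lim _) _ => m;
  by have [_ /(_ i i_gt0 i_lt) []] := v_bounds m.
Qed.

End RatioBounds.

Section Invariance.
Variables (R : realType) (N : nat).
Implicit Types (w : 'cV[R]_N.+1).

Lemma ratio_bounds_e1 (p c : R) : ratio_bounds N.+1 p c (coord (e1 R N.+1)).
Proof.
split => [j j_range | i i_gt0 i_lt]; first by rewrite coord_e1.
rewrite !coord_e1 ?leqnn ?andbT; try lia.
rewrite eqxx !gtn_eqF; try lia.
by rewrite /= !mulr0 lexx ler01.
Qed.

Lemma ratio_bounds_normalize (p c : R) w :
  ratio_bounds N.+1 p c (coord w) ->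
  ratio_bounds N.+1 p c (coord (normalize w)).
Proof.
move=> w_bounds; have w_ge0 := entries_ge0_coord w_bounds.1.
apply: ratio_bounds_scale w_bounds => [|j _]; last by rewrite /coord mxE.
by rewrite invr_ge0 sumr_ge0.
Qed.

Lemma ratio_bounds_mul_Theta (p c : nat) w : (1 < p)%N ->
  ratio_bounds N.+1 p%:R (p ^ 2 * c)%N%:R (coord w) ->
  ratio_bounds N.+1 p%:R c%:R (coord (Theta R N.+1 (p * c) c *m w)).
Proof.
move=> p_gt1 [w_coord_ge0 w_bounds].
have w_ge0 := entries_ge0_coord w_coord_ge0.
split => [j _ | i i_gt0 i_lt]; first exact: coord_mul_Theta_ge0.
have N_gt0 : (0 < N)%N by lia.
have [hA hB _] := w_bounds i i_gt0 i_lt.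
have tail_ge := coord_last_le_tail_sum N_gt0 w_ge0.
have W2_ge0 : 0 <= coord w (2 * i) by apply: w_coord_ge0; lia.
have W3_ge0 : 0 <= coord w (2 * i).+1 by apply: w_coord_ge0; lia.
have W1_ge0 : 0 <= coord w 1 by apply: w_coord_ge0.
rewrite coord_Theta_first coord_Theta_last // coord_Theta_even //.
rewrite coord_Theta_odd // -[c.+1]addn1 -[(p * c).+1]addn1 !natrD natrM.
move: hA hB tail_ge W1_ge0 W2_ge0 W3_ge0; rewrite natrM natrX.
set P := p%:R; set C := c%:R; set S := tail_sum w; set W1 := coord w 1.
set W2 := coord w (2 * i); set W3 := coord w (2 * i).+1.
move=> hA hB tail_ge W1_ge0 W2_ge0 W3_ge0.
have P_ge2 : 2 <= P :> R by rewrite (ler_nat R 2).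
have W3_le_W2 : W3 <= W2.
  have : 0 <= (P - 2) * W3 by rewrite mulr_ge0 // subr_ge0.
  lra.
have tail_dominates : C * (W2 + W3) <= S.
  have : 2 * C * W2 <= P ^+ 2 * C * W2.
    by rewrite !ler_wpM2r // expr2; nra.
  have : C * W3 <= C * W2 by rewrite ler_wpM2l.
  lra.
have : P * C * ((P - 1) * W3) <= P * C * W2 by rewrite ler_wpM2l // mulr_ge0.
split; lra.
Qed.

Lemma ratio_bounds_prodTheta p c1 k m : (1 < p)%N ->
  ratio_bounds N.+1 p%:R (cseq p c1 k.+1)%:R
    (coord (prodTheta R N.+1 p c1 k m *m e1 R N.+1)).
Proof.
move=> p_gt1; move Ed: (m - k)%N => d; elim: d k Ed => [|d IH] k Ed.
  have le_mk : (m <= k)%N by rewrite -subn_eq0 Ed.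
  by rewrite prodTheta_id // mul1mx; apply: ratio_bounds_e1.
have lt_km : (k < m)%N by rewrite -subn_gt0 Ed.
rewrite prodTheta_recl // -mulmxA /Theta_k /aseq.
apply: ratio_bounds_mul_Theta => //.
by rewrite -(cseqSS p c1 k); apply: IH; lia.
Qed.

End Invariance.

Theorem mainTheorem8 (R : realType) (n p c1 : nat) (lam : nat -> nat -> R) :
  ~~ odd n -> (4 <= n)%N -> (n.+1 <= p)%N -> (0 < c1)%N ->
  (forall k : nat, exists t : R, 0 < t /\
     exists u : 'I_n -> R,
       (forall j : 'I_n, (fun m : nat => nvec R n p c1 k m j 0) @ \oo --> u j) /\
       (forall j : 'I_n, lam k j.+1 = t * u j)) ->
  forall k i : nat, (1 <= k)%N -> (1 <= i)%N -> (i <= n./2 - 1)%N ->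
    [/\ lam k (2 * i).+1 <= (p%:R - 1)^-1 * lam k (2 * i)%N,
        lam k (2 * i)%N <= (cseq p c1 k)%:R^-1 * lam k n
      & ((cseq p c1 k)%:R - 1) * lam k (2 * i)%N <= lam k 1%N].
Proof.
case: n => [|N] // _ _ p_gt_n c1_gt0 lam_lim k i _ i_gt0 i_le.
have p_gt1 : (1 < p)%N by lia.
have i_lt : ((2 * i).+1 < N.+1)%N.
  by have := odd_double_half N.+1; rewrite -muln2; lia.
have [t [t_gt0 [u [u_lim lam_eq]]]] := lam_lim k.
have u_bounds :
    ratio_bounds N.+1 p%:R (cseq p c1 k.+1)%:R (fun j => u (inord j.-1)).
  apply: (ratio_bounds_lim (v_ := fun m => coord (nvec R N.+1 p c1 k m))).
    by move=> j; apply: u_lim.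
  by move=> m; apply/ratio_bounds_normalize/ratio_bounds_prodTheta.
have lam_bounds : ratio_bounds N.+1 p%:R (cseq p c1 k)%:R (lam k).
  apply: (ratio_bounds_le (c' := (cseq p c1 k.+1)%:R)).
    by rewrite ler_nat cseq_leS // ltnW.
  apply: ratio_bounds_scale (ltW t_gt0) _ u_bounds => j /andP[j_gt0 j_le].
  by rewrite -lam_eq inordK ?prednK.
have [_ /(_ i i_gt0 i_lt) [hA hB hC]] := lam_bounds.
have ck_gt0 : 0 < (cseq p c1 k)%:R :> R.
  by rewrite ltr0n muln_gt0 expn_gt0 ltnW.
by split; rewrite // ler_pdivlMl // subr_gt0 (ltr_nat R 1).
Qed.
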